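(* Let $\mathcal{V}$ be a veering triangulation, $w$ a weight system, $F_w=\{f:w_f>0\}$, and $\varphi\in\mathrm{Aut}^+(\mathcal{Q}_{\mathcal{V},w}\mid\tau_{\mathcal{V},w})$. If $e$ is the large edge of $f^+\in F_w^+$, then the regluing map sends $e$ to the large edge of $r^\varphi(f^+)\in F_w^-$.
   Context: Taut and veering structures. $\mathcal{V}$ is an ideal triangulation $\mathcal{T}$ of a compact oriented 3-manifold with a taut structure (a coorientation of faces such that each tetrahedron has two faces cooriented out—top faces, meeting in the top diagonal—and two cooriented in—bottom faces, meeting in the bottom diagonal—and every edge is the top diagonal of exactly one and the bottom diagonal of exactly one tetrahedron) and a veering structure (a red/blue edge coloring such that in each tetrahedron, for a top face with edges $e_0,e_1,e_2$ counterclockwise viewed from above and $e_0$ the top diagonal, $e_1$ is red, $e_2$ blue; for a bottom face with edges $e_0,e_1,e_2$ counterclockwise viewed from above and $e_0$ the bottom diagonal, $e_1$ is blue, $e_2$ red). The large edge of a face $f$ is the edge of $f$ that is the bottom diagonal of the tetrahedron of which $f$ is a bottom face. Carried surface. A weight system $w$ is a nonzero nonnegative integral solution of the branch equations (for each edge, faces on its two sides—separated by the tetrahedra where it is top/bottom diagonal—have equal weight sums). Pulling apart sheets of $\sum w_f f$ gives a surface triangulated by $\mathcal{Q}_{\mathcal{V},w}$ with $w_f$ copies of each face, ordered from lowermost $L(f)$ to uppermost $U(f)$; $\mathfrak{a}(y)$ is the copy immediately above $y$; the large edge of a copy of $f$ is the corresponding copy of the large edge of $f$, and $\tau_{\mathcal{V},w}$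 is the dual train track whose large branch in each triangle is dual to its large edge. $\mathrm{Aut}^+(\mathcal{Q}_{\mathcal{V},w}\mid\tau_{\mathcal{V},w})$ consists of orientation-preserving combinatorial automorphisms (bijection $\varphi$ of triangles with edge bijections $\varphi_g$ compatible with edge identifications) such that $\varphi_g$ maps the large edge of $g$ to the large edge of $\varphi(g)$ for all triangles $g$. Regluing map. Cutting $\mathcal{T}$ along the faces of $F_w$ gives, for each $f\in F_w$, a face $f^+\in F_w^+$ (top face of the tetrahedron below $f$) and $f^-\in F_w^-$ (bottom face of the tetrahedron above $f$), both naturally identified with $f$; the large edge of $f^\pm$ is the one corresponding to the large edge of $f$. For $f\in F_w$ let $g_1=\varphi(L(f))$ and, while $g_i$ is not an uppermost copy, $g_{i+1}=\varphi(\mathfrak{a}(g_i))$; it ends at $g_k=U(f')$. Then $r^\varphi(f^+)=f'^-$, and the regluing map sends an edge of $f^+$ to the edge of $f'^-$ obtained by the composite: edge of $f$ $\to$ corresponding edge of $L(f)$ $\to$ (by $\varphi_{L(f)}$) edge of $g_1$ $\to$ (by $\mathfrak{a}$) edge of $\mathfrak{a}(g_1)$ $\to$ (by $\varphi_{\mathfrak{a}(g_1)}$) edge of $g_2\to\cdots\to$ edge of $g_k=U(f')$ $\to$ corresponding edge of $f'$. *)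

From mathcomp Require Import all_boot all_fingroup.

Set Implicit Arguments.
Unset Strict Implicit.
Unset Printing Implicit Defensive.

(* Ideal triangulations.  Each tetrahedron has vertices 'I_4, ordered so that *)
(* the order 0123 is positive for the orientation of M.  Face i of a         *)
(* tetrahedron is the face opposite vertex i.  Face i of t is glued to face  *)
(* [gperm t i i] of [gtet t i] by the vertex bijection [gperm t i].          *)
(* [top t i] : face i of t is a top face (cooriented out of t).              *)
(* [col (t,E)] : colour of the edge of T represented by the edge E (a 2-set  *)
(* of vertices) of t; true = red, false = blue.                              *)
Record vtri := VTri {
  tet : finType;
  gtet : tet -> 'I_4 -> tet;
  gperm : tet -> 'I_4 -> {perm 'I_4};
  top : tet -> 'I_4 -> bool;
  col : tet * {set 'I_4} -> bool
}.

Section Defs.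
Variable V : vtri.
Local Notation T := (tet V).

Definition erel : rel (T * {set 'I_4}) := fun x y =>
  [exists i : 'I_4, (i \notin x.2) && (y == (gtet x.1 i, gperm x.1 i @: x.2))].

Definition same_edge (x y : T * {set 'I_4}) := connect erel x y.

(* top diagonal: edge where the two top faces meet (its vertices are the
   indices of the bottom faces); bottom diagonal symmetrically *)
Definition topdiag (t : T) : {set 'I_4} := [set k | ~~ top t k].
Definition botdiag (t : T) : {set 'I_4} := [set k | top t k].

(* vertices of face i, in counterclockwise order viewed from outside the
   tetrahedron (boundary orientation of the positive simplex 0123) *)
Definition vcyc (i : 'I_4) (s : 'I_3) : 'I_4 :=
  inord (nth 0 (nth [::] [:: [:: 1; 2; 3]; [:: 0; 3; 2]; [:: 0; 1; 3]; [:: 0; 2; 1]]%N i) s).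

Definition side_edge (i : 'I_4) (s : 'I_3) : {set 'I_4} :=
  [set vcyc i s; vcyc i (ordS s)].

Definition ideal_triangulation : Prop :=
  [/\ forall (t : T) i, gtet (gtet t i) (gperm t i i) = t,
      forall (t : T) i, gperm (gtet t i) (gperm t i i) = ((gperm t i)^-1)%g,
      forall (t : T) i, ~ (gtet t i = t /\ gperm t i i = i)
    & forall (t : T) i, odd_perm (gperm t i) (* orientation-reversing gluings *)].

Definition taut : Prop :=
  [/\ forall (t : T), #|[set k | top t k]| = 2,
      forall (t : T) i, top (gtet t i) (gperm t i i) = ~~ top t i,
      forall (t : T) (E : {set 'I_4}), #|E| = 2 ->
        #|[set t' | same_edge (t, E) (t', topdiag t')]| = 1
    & forall (t : T) (E : {set 'I_4}), #|E| = 2 ->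
        #|[set t' | same_edge (t, E) (t', botdiag t')]| = 1].

(* For a top face the counterclockwise-from-above order is the
   counterclockwise-from-outside order (successor ordS); for a bottom face it
   is the reverse one (successor ord_pred). *)
Definition veering_col : Prop :=
  [/\ forall x y, same_edge x y -> col x = col y,
      forall (t : T) i s, top t i -> side_edge i s = topdiag t ->
        col (t, side_edge i (ordS s)) = true /\
        col (t, side_edge i (ordS (ordS s))) = false
    & forall (t : T) j s, ~~ top t j -> side_edge j s = botdiag t ->
        col (t, side_edge j (ord_pred s)) = false /\
        col (t, side_edge j (ord_pred (ord_pred s))) = true].

Definition veering : Prop := [/\ ideal_triangulation, taut & veering_col].

(* Faces of T are represented by (t,i) with [top t i], t the tetrahedron
   below the face.  A face-side is (t,i,s), s : 'I_3 a side of face i. *)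
Definition fside := (T * 'I_4 * 'I_3)%type.

(* the side of face (t,i) corresponding to the large edge of the face, i.e.
   to the bottom diagonal of the tetrahedron above it *)
Definition is_large (t : T) (i : 'I_4) (s : 'I_3) : bool :=
  gperm t i @: side_edge i s == botdiag (gtet t i).

(* [down x y]: y is the face-side immediately below x on the same side of the
   common edge of T (inside the tetrahedron below x, for which the edge is
   an equatorial edge). *)
Definition down : rel fside := fun x y =>
  [&& top x.1.1 x.1.2, top y.1.1 y.1.2,
      side_edge x.1.2 x.2 != topdiag x.1.1 &
      [exists j : 'I_4, [&& j \notin side_edge x.1.2 x.2, j != x.1.2,
          y.1.1 == gtet x.1.1 j, y.1.2 == gperm x.1.1 j j &
          side_edge y.1.2 y.2 == gperm x.1.1 j @: side_edge x.1.2 x.2]]].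

Variable w : T -> 'I_4 -> nat.

(* weight system: a function on faces (invariant under gluing), nonzero,
   satisfying the branch equation at every edge (each edge of T is the top
   diagonal of exactly one tetrahedron t; the two sides of the edge start at
   the two top faces of t) *)
Definition weight_system : Prop :=
  [/\ forall (t : T) i, w t i = w (gtet t i) (gperm t i i),
      exists (t : T) i, top t i /\ 0 < w t i
    & forall (t : T) i1 i2 s1 s2, i1 != i2 -> top t i1 -> top t i2 ->
        side_edge i1 s1 = topdiag t -> side_edge i2 s2 = topdiag t ->
        \sum_(y : fside | connect down y (t, i1, s1)) w y.1.1 y.1.2 =
        \sum_(y : fside | connect down y (t, i2, s2)) w y.1.1 y.1.2].

(* number of sheets strictly below the face-side x at its edge *)
Definition level (x : fside) : nat :=
  \sum_(y : fside | [exists z, down x z && connect down z y]) w y.1.1 y.1.2.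

(* Triangles of Q_{V,w}: copies (t,i,k) of the face (t,i), k < w t i,
   k = 0 lowermost.  Sides of a copy are those of the face (ccw from above). *)
Definition qtri (g : T * 'I_4 * nat) : bool :=
  top g.1.1 g.1.2 && (g.2 < w g.1.1 g.1.2).

(* edge identifications of Q_{V,w}: two copy-sides are glued iff they lie on
   the same edge of T, on opposite sides of it, at the same height *)
Definition gluedQ (g : T * 'I_4 * nat) (s : 'I_3) (h : T * 'I_4 * nat) (s' : 'I_3) : bool :=
  [&& qtri g, qtri h,
      same_edge (g.1.1, side_edge g.1.2 s) (h.1.1, side_edge h.1.2 s'),
      ~~ (connect down (g.1, s) (h.1, s') || connect down (h.1, s') (g.1, s)) &
      level (g.1, s) + g.2 == level (h.1, s') + h.2].

(* Aut^+(Q_{V,w} | tau_{V,w}) : phi on triangles, phis g : sides of g ->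
   sides of phi g *)
Definition autQ (phi : T * 'I_4 * nat -> T * 'I_4 * nat)
    (phis : T * 'I_4 * nat -> 'I_3 -> 'I_3) : Prop :=
  [/\ forall g, qtri g -> qtri (phi g),
      forall g h, qtri g -> qtri h -> phi g = phi h -> g = h,
      (* bijection on sides, orientation preserving: cyclic order of sides
         preserved *)
      forall g, qtri g -> injective (phis g) /\
        forall s, phis g (ordS s) = ordS (phis g s),
      forall g s h s', qtri g -> qtri h ->
        gluedQ g s h s' = gluedQ (phi g) (phis g s) (phi h) (phis h s')
    &
      forall g s, qtri g -> is_large g.1.1 g.1.2 s ->
        is_large (phi g).1.1 (phi g).1.2 (phis g s)].

(* g_{i+1} = phi (a g_i) while g_i is not uppermost; sides carried along by
   a (identity on side labels) and phis *)
Fixpoint reglue_aux phi phis (n : nat) (g : T * 'I_4 * nat) (s : 'I_3)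
    : option ((T * 'I_4 * nat) * 'I_3) :=
  match n with
  | 0 => None
  | n'.+1 => if g.2.+1 == w g.1.1 g.1.2 then Some (g, s)
             else reglue_aux phi phis n' (phi (g.1, g.2.+1)) (phis (g.1, g.2.+1) s)
  end.

(* regluing map on the side s of f^+ for f = (t,i): result (U(f'), s') means
   r^phi(f^+) = f'^- and side s of f^+ goes to side s' of f'^-.  The fuel
   bounds the number of triangles of Q. *)
Definition reglue phi phis (t : T) (i : 'I_4) (s : 'I_3) :=
  reglue_aux phi phis (\sum_(t0 : T) \sum_(i0 : 'I_4) w t0 i0).+1
    (phi (t, i, 0)) (phis (t, i, 0) s).

End Defs.

(** Starting from the lowermost copy [L(f)], the regluing sequence
    [g_(k+1) = phi (a g_k)] carries the large edge of [L(f)] along, since both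
    [a] (which keeps side labels) and [phi] (by assumption) preserve large
    edges; so the only issue is that the sequence reaches an uppermost copy.
    It does: [phi \o a] is injective, and its image avoids [g_1 = phi (L(f))]
    because [a] never produces a lowermost copy.  Hence the [g_k] are pairwise
    distinct triangles of the finite surface [Q_(V,w)] and cannot go on
    beyond the number of its triangles.  Neither the veering structure nor
    the branch equations play a role. *)
From mathcomp Require Import all_boot all_fingroup.

Set Implicit Arguments.
Unset Strict Implicit.
Unset Printing Implicit Defensive.

Section InjectiveOrbit.
Variables (X : eqType) (f : X -> X) (P : pred X) (x0 : X) (n : nat).
Hypothesis f_inj : {in P &, injective f}.
Hypothesis f_neq_x0 : forall y, P y -> f y != x0.
Hypothesis iter_in_P : forall j, j < n -> P (iter j f x0).

Lemma iter_inj_le j k : j <= n -> k <= n -> iter j f x0 = iter k f x0 -> j = k.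
Proof.
elim: j k => [|j IHj] [|k] //= le_jn le_kn.
- by move=> eq_x0; have := f_neq_x0 (iter_in_P le_kn); rewrite -eq_x0 eqxx.
- by move=> eq_x0; have := f_neq_x0 (iter_in_P le_jn); rewrite eq_x0 eqxx.
- move=> /f_inj eq_jk; congr _.+1.
  by apply: IHj (ltnW le_jn) (ltnW le_kn) (eq_jk _ _); apply: iter_in_P.
Qed.

Lemma traject_uniq : uniq (traject f x0 n.+1).
Proof.
apply/(uniqP x0) => j k; rewrite !inE size_traject !ltnS => le_jn le_kn.
by rewrite !nth_traject ?ltnS //; apply: iter_inj_le.
Qed.

End InjectiveOrbit.

Lemma uniq_size_leq_sum (A : finType) (c : A -> nat) (l : seq (A * nat)) :
  uniq l -> {in l, forall x, x.2 < c x.1} -> size l <= \sum_(a : A) c a.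
Proof.
move=> uniq_l bounded_l.
set L := [seq (a, k) | a <- enum A, k <- iota 0 (c a)].
have -> : \sum_(a : A) c a = size L.
  rewrite size_allpairs_dep sumnE big_map.
  under [RHS]eq_bigr do rewrite size_iota.
  by rewrite big_enum.
apply: uniq_leq_size => // -[a k] /bounded_l /= lt_k.
by apply/allpairsPdep; exists a, k; rewrite mem_enum mem_iota.
Qed.

Section Regluing.
Variables (V : vtri) (w : tet V -> 'I_4 -> nat).
Variables (phi : tet V * 'I_4 * nat -> tet V * 'I_4 * nat)
          (phis : tet V * 'I_4 * nat -> 'I_3 -> 'I_3).
Local Notation tri := (tet V * 'I_4 * nat)%type.

Definition above (g : tri) : tri := (g.1, g.2.+1).
Definition uppermost (g : tri) : bool := g.2.+1 == w g.1.1 g.1.2.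
Definition has_copy_above (g : tri) : bool := qtri w g && ~~ uppermost g.
Definition reglue_step (g : tri) : tri := phi (above g).

Lemma qtri_above g : has_copy_above g -> qtri w (above g).
Proof.
case: g => [[t i] k] /andP[/andP[/= top_ti lt_k] ne_k].
by rewrite /qtri top_ti ltn_neqAle ne_k.
Qed.

Lemma qtri_size_leq (l : seq tri) :
  uniq l -> all (qtri w) l -> size l <= \sum_(t : tet V) \sum_(i : 'I_4) w t i.
Proof.
move=> uniq_l /allP qtri_l; rewrite pair_big /=.
apply: (uniq_size_leq_sum (c := fun p => w p.1 p.2)) uniq_l _ => g /qtri_l.
by case/andP.
Qed.

Lemma reglue_aux_None n g s : reglue_aux w phi phis n g s = None ->
  forall j, j < n -> ~~ uppermost (iter j reglue_step g).
Proof.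
elim: n g s => [|n IHn] g s //=.
case: ifP => // not_up /IHn {}IHn [|j] lt_jn; first by rewrite /uppermost not_up.
by rewrite iterSr; apply: IHn.
Qed.

Hypothesis phiQ : autQ w phi phis.

Lemma qtri_reglue_step g : has_copy_above g -> qtri w (reglue_step g).
Proof. by case: phiQ => qtri_phi _ _ _ _ /qtri_above/qtri_phi. Qed.

Lemma reglue_step_inj : {in has_copy_above &, injective reglue_step}.
Proof.
case: phiQ => _ phi_inj _ _ _ [[t1 i1] k1] [[t2 i2] k2] up1 up2.
by move/(phi_inj _ _ (qtri_above up1) (qtri_above up2)) => [-> -> ->].
Qed.

Lemma reglue_step_neq_lowest t i g : qtri w (t, i, 0) ->
  has_copy_above g -> reglue_step g != phi (t, i, 0).
Proof.
case: phiQ => _ phi_inj _ _ _ q0 up_g.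
by apply/eqP => /(phi_inj _ _ (qtri_above up_g) q0).
Qed.

Lemma reglue_aux_large n g s g' s' :
  qtri w g -> is_large g.1.1 g.1.2 s ->
  reglue_aux w phi phis n g s = Some (g', s') -> is_large g'.1.1 g'.1.2 s'.
Proof.
case: phiQ => qtri_phi _ _ _ large_phi.
elim: n g s => [|n IHn] g s //= qg large_s.
case: ifP => [_ [<- <-] // | /negbT not_up].
have q_above : qtri w (above g) by apply: qtri_above; rewrite /has_copy_above qg.
by apply: IHn; [apply: qtri_phi | apply: large_phi].
Qed.

Lemma reglue_large t i s g' s' : qtri w (t, i, 0) -> is_large t i s ->
  reglue w phi phis t i s = Some (g', s') -> is_large g'.1.1 g'.1.2 s'.
Proof.
case: phiQ => qtri_phi _ _ _ large_phi q0 large_s.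
exact: reglue_aux_large (qtri_phi _ q0) (large_phi _ _ q0 large_s).
Qed.

Lemma reglue_terminates t i s : qtri w (t, i, 0) -> reglue w phi phis t i s != None.
Proof.
case: phiQ => qtri_phi _ _ _ _ q0; rewrite /reglue.
set N := \sum_(t0 : tet V) \sum_(i0 : 'I_4) w t0 i0.
set g1 := phi (t, i, 0).
apply/eqP => /reglue_aux_None not_up.
have orbit_up j : j < N.+1 -> has_copy_above (iter j reglue_step g1).
  elim: j => [|j IHj] lt_jN; rewrite /has_copy_above not_up // andbT.
    exact: qtri_phi.
  exact/qtri_reglue_step/IHj/ltnW.
have uniq_orbit : uniq (traject reglue_step g1 N.+1).
  apply: traject_uniq reglue_step_inj _ _ => [y|j lt_jN].
    exact: reglue_step_neq_lowest.
  exact/orbit_up/ltnW.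
suff: all (qtri w) (traject reglue_step g1 N.+1).
  by move/(qtri_size_leq uniq_orbit); rewrite size_traject ltnn.
apply/allP => y /trajectP [j lt_jN ->].
by case/andP: (orbit_up j lt_jN).
Qed.

End Regluing.

Theorem lemma3p18 (V : vtri) (w : tet V -> 'I_4 -> nat)
    (phi : tet V * 'I_4 * nat -> tet V * 'I_4 * nat)
    (phis : tet V * 'I_4 * nat -> 'I_3 -> 'I_3)
    (t : tet V) (i : 'I_4) (s : 'I_3) :
  veering V -> weight_system w -> autQ w phi phis ->
  top t i -> 0 < w t i -> is_large t i s ->
  exists (g : tet V * 'I_4 * nat) (s' : 'I_3),
    reglue w phi phis t i s = Some (g, s') /\ is_large g.1.1 g.1.2 s'.
Proof.
move=> _ _ phiQ top_ti pos_w large_s.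
have q0 : qtri w (t, i, 0) by rewrite /qtri top_ti pos_w.
have := reglue_terminates phiQ s q0.
case E: reglue => [[g s']|] // _; exists g, s'; split=> //.
exact: (reglue_large phiQ q0 large_s E).
Qed.
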